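(* Let $\mathcal C$ be a Markov category in which, for every object $X$, the copy morphism $\mathrm{copy}_X$ is an initial dilation of $\mathrm{id}_X$. Then every non-creative morphism of $\mathcal C$ is deterministic, and the class of non-creative morphisms equals the class of deterministic morphisms if and only if $\mathcal C$ is positive.
   Context: A Markov category is a symmetric monoidal category $(\mathcal C,\otimes,I)$ with commutative comonoids $\mathrm{copy}_X\colon X\to X\otimes X$, $\mathrm{del}_X\colon X\to I$ compatible with $\otimes$, with $I$ terminal. $f\colon A\to X$ is deterministic if $\mathrm{copy}_X\circ f=(f\otimes f)\circ\mathrm{copy}_A$. $\mathcal C$ is positive if for all $f\colon X\to Y$, $g\colon Y\to Z$ with $g\circ f$ deterministic, $(\mathrm{id}_Y\otimes g)\circ\mathrm{copy}_Y\circ f=(f\otimes (g\circ f))\circ\mathrm{copy}_X$. A dilation of $p\colon A\to X$ is $\pi\colon A\to X\otimes E$ with $(\mathrm{id}_X\otimes\mathrm{del}_E)\circ\pi=p$. For a dilation $\pi\colon A\to X\otimes E$ and $f_1,f_2\colon E\to E'$, these are $\pi$-dilationally equal if for every dilation $\rho\colon A\to X\otimes E\otimes F$ of $\pi$, $(\mathrm{id}_X\otimes f_1\otimes\mathrm{id}_F)\circ\rho=(\mathrm{id}_X\otimes f_2\otimes\mathrm{id}_F)\circ\rho$. A dilation $\pi\colon A\to X\otimes E$ of $p$ is initial if for every dilation $\pi'\colon A\to X\otimes E'$ of $p$ there is $f\colon E\to E'$ with $(\mathrm{id}_X\otimes f)\circ\pi=\pi'$, unique up to $\pi$-dilational equality.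 A morphism $p\colon A\to X$ is non-creative if every dilation $\pi\colon A\to X\otimes E$ of $p$ equals $(p\otimes\mathrm{id}_E)\circ\iota$ for some dilation $\iota\colon A\to A\otimes E$ of $\mathrm{id}_A$. *)

(* The symmetric monoidal structure is NOT assumed strict:
   associators and unitors are explicit, with the usual coherence axioms. *)

Set Implicit Arguments.
Unset Strict Implicit.

Record MarkovCat := {
  Ob : Type;
  Hom : Ob -> Ob -> Type;
  comp : forall A B C : Ob, Hom B C -> Hom A B -> Hom A C;
  idm : forall A : Ob, Hom A A;
  comp_assoc : forall A B C D (h : Hom C D) (g : Hom B C) (f : Hom A B),
      comp h (comp g f) = comp (comp h g) f;
  comp_id_l : forall A B (f : Hom A B), comp (idm B) f = f;
  comp_id_r : forall A B (f : Hom A B), comp f (idm A) = f;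

  tens : Ob -> Ob -> Ob;
  unit : Ob;
  tensm : forall A B C D : Ob, Hom A B -> Hom C D -> Hom (tens A C) (tens B D);
  tensm_id : forall A C, tensm (idm A) (idm C) = idm (tens A C);
  tensm_comp : forall A B E C D F (g : Hom B E) (f : Hom A B) (g' : Hom D F) (f' : Hom C D),
      tensm (comp g f) (comp g' f') = comp (tensm g g') (tensm f f');

  assoc : forall A B C, Hom (tens (tens A B) C) (tens A (tens B C));
  assoc_inv : forall A B C, Hom (tens A (tens B C)) (tens (tens A B) C);
  assoc_iso1 : forall A B C, comp (assoc_inv A B C) (assoc A B C) = idm _;
  assoc_iso2 : forall A B C, comp (assoc A B C) (assoc_inv A B C) = idm _;
  assoc_nat : forall A A' B B' C C' (f : Hom A A') (g : Hom B B') (h : Hom C C'),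
      comp (assoc A' B' C') (tensm (tensm f g) h) = comp (tensm f (tensm g h)) (assoc A B C);

  lunit : forall A, Hom (tens unit A) A;
  lunit_inv : forall A, Hom A (tens unit A);
  lunit_iso1 : forall A, comp (lunit_inv A) (lunit A) = idm _;
  lunit_iso2 : forall A, comp (lunit A) (lunit_inv A) = idm _;
  lunit_nat : forall A B (f : Hom A B),
      comp (lunit B) (tensm (idm unit) f) = comp f (lunit A);
  runit : forall A, Hom (tens A unit) A;
  runit_inv : forall A, Hom A (tens A unit);
  runit_iso1 : forall A, comp (runit_inv A) (runit A) = idm _;
  runit_iso2 : forall A, comp (runit A) (runit_inv A) = idm _;
  runit_nat : forall A B (f : Hom A B),
      comp (runit B) (tensm f (idm unit)) = comp f (runit A);

  pentagon : forall A B C D,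
      comp (assoc A B (tens C D)) (assoc (tens A B) C D)
      = comp (tensm (idm A) (assoc B C D))
             (comp (assoc A (tens B C) D) (tensm (assoc A B C) (idm D)));
  triangle : forall A B,
      comp (tensm (idm A) (lunit B)) (assoc A unit B) = tensm (runit A) (idm B);

  swap : forall A B, Hom (tens A B) (tens B A);
  swap_nat : forall A A' B B' (f : Hom A A') (g : Hom B B'),
      comp (swap A' B') (tensm f g) = comp (tensm g f) (swap A B);
  swap_invol : forall A B, comp (swap B A) (swap A B) = idm _;
  hexagon : forall A B C,
      comp (assoc B C A) (comp (swap A (tens B C)) (assoc A B C))
      = comp (tensm (idm B) (swap A C)) (comp (assoc B A C) (tensm (swap A B) (idm C)));

  copy : forall X, Hom X (tens X X);
  del : forall X, Hom X unit;
  copy_counit_l : forall X, comp (tensm (del X) (idm X)) (copy X) = lunit_inv X;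
  copy_counit_r : forall X, comp (tensm (idm X) (del X)) (copy X) = runit_inv X;
  copy_coassoc : forall X,
      comp (assoc X X X) (comp (tensm (copy X) (idm X)) (copy X))
      = comp (tensm (idm X) (copy X)) (copy X);
  copy_comm : forall X, comp (swap X X) (copy X) = copy X;

  copy_tens : forall X Y,
      copy (tens X Y)
      = comp (assoc_inv X Y (tens X Y))
          (comp (tensm (idm X) (assoc Y X Y))
            (comp (tensm (idm X) (tensm (swap X Y) (idm Y)))
              (comp (tensm (idm X) (assoc_inv X Y Y))
                (comp (assoc X X (tens Y Y)) (tensm (copy X) (copy Y))))));
  del_tens : forall X Y, del (tens X Y) = comp (lunit unit) (tensm (del X) (del Y));
  copy_unit : copy unit = lunit_inv unit;
  del_unit : del unit = idm unit;

  unit_terminal : forall A (f : Hom A unit), f = del A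
}.

Arguments Hom : clear implicits.
Arguments comp {m A B C} _ _.
Arguments idm {m} A.
Arguments tens {m} _ _.
Arguments unit {m}.
Arguments tensm {m A B C D} _ _.
Arguments assoc {m} A B C.
Arguments assoc_inv {m} A B C.
Arguments lunit {m} A.
Arguments lunit_inv {m} A.
Arguments runit {m} A.
Arguments runit_inv {m} A.
Arguments swap {m} A B.
Arguments copy {m} X.
Arguments del {m} X.

Section Defs.
Variable C : MarkovCat.

Definition deterministic {A X : Ob C} (f : Hom C A X) : Prop :=
  comp (copy X) f = comp (tensm f f) (copy A).

Definition positive : Prop :=
  forall (X Y Z : Ob C) (f : Hom C X Y) (g : Hom C Y Z),
    deterministic (comp g f) ->
    comp (comp (tensm (idm Y) g) (copy Y)) f = comp (tensm f (comp g f)) (copy X).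

Definition is_dilation {A X E : Ob C} (p : Hom C A X) (pi : Hom C A (tens X E)) : Prop :=
  comp (runit X) (comp (tensm (idm X) (del E)) pi) = p.

Definition dil_equal {A X E E' : Ob C} (pi : Hom C A (tens X E)) (f1 f2 : Hom C E E') : Prop :=
  forall (F : Ob C) (rho : Hom C A (tens (tens X E) F)),
    is_dilation pi rho ->
    comp (tensm (tensm (idm X) f1) (idm F)) rho = comp (tensm (tensm (idm X) f2) (idm F)) rho.

Definition initial_dilation {A X E : Ob C} (p : Hom C A X) (pi : Hom C A (tens X E)) : Prop :=
  is_dilation p pi /\
  forall (E' : Ob C) (pi' : Hom C A (tens X E')),
    is_dilation p pi' ->
    (exists f : Hom C E E', comp (tensm (idm X) f) pi = pi') /\
    (forall f g : Hom C E E',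
        comp (tensm (idm X) f) pi = pi' ->
        comp (tensm (idm X) g) pi = pi' ->
        dil_equal pi f g).

Definition non_creative {A X : Ob C} (p : Hom C A X) : Prop :=
  forall (E : Ob C) (pi : Hom C A (tens X E)),
    is_dilation p pi ->
    exists iota : Hom C A (tens A E),
      is_dilation (idm A) iota /\ pi = comp (tensm p (idm E)) iota.

End Defs.

Arguments deterministic {C A X} f.
Arguments is_dilation {C A X E} p pi.
Arguments dil_equal {C A X E E'} pi f1 f2.
Arguments initial_dilation {C A X E} p pi.
Arguments non_creative {C A X} p.

(* If copy_A is an initial dilation of id_A, every dilation of id_A has the form
   ⟨id_A, f⟩ := (id_A ⊗ f) ∘ copy_A.  Hence p : A → X is non-creative exactly when each of
   its dilations π is the pairing ⟨p, f⟩ of its marginals; for the dilation copy_X ∘ p this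
   says that p is deterministic.

   In a positive category, positivity applied to a dilation π of a deterministic p and to
   its first marginal gives ⟨id, marg_X⟩ ∘ π = ⟨π, p⟩; marginalizing the first factor
   and using ⟨marg_E, marg_X⟩ = swap yields π = ⟨p, marg_E ∘ π⟩, so p is non-creative.
   Conversely, if g ∘ f is deterministic and hence non-creative, its dilation
   ⟨g, id⟩ ∘ f splits as ⟨g ∘ f, f⟩, which is the positivity equation up to a swap. *)


Local Notation "g ∘ f" := (comp g f) (at level 42, right associativity).
Local Notation "f ⊗ g" := (tensm f g) (at level 35, no associativity).

Section MarkovCategory.
Context {C : MarkovCat}.

Lemma comp_rewrite {A B D : Ob C} {x : Hom C B D} {y : Hom C A B} {z : Hom C A D} :
  x ∘ y = z -> forall W (w : Hom C W A), x ∘ y ∘ w = z ∘ w.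
Proof. intros H W w. rewrite comp_assoc, H. reflexivity. Qed.

(* Composites are kept right-nested; [crewrite L] rewrites with [L : x ∘ y = z] also inside
   a composite x ∘ (y ∘ w), instantiating the arguments of [L] by unification. *)
Ltac especialize H :=
  repeat match type of H with
  | forall _ : ?T, _ => let e := fresh in evar (e : T); specialize (H e); subst e
  end.

Ltac normalize := repeat rewrite <- comp_assoc.

Tactic Notation "crewrite" uconstr(L) :=
  let H := fresh in epose proof L as H; especialize H;
  first [rewrite H | rewrite (comp_rewrite H)]; clear H; normalize.
Tactic Notation "crewrite" "<-" uconstr(L) :=
  let H := fresh in epose proof L as H; especialize H;
  first [rewrite <- H | rewrite (comp_rewrite (eq_sym H))]; clear H; normalize.

Lemma split_mono_cancel {A B W : Ob C} (i : Hom C A B) (j : Hom C B A) (x y : Hom C W A) :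
  j ∘ i = idm A -> i ∘ x = i ∘ y -> x = y.
Proof.
  intros Hji H. rewrite <- (comp_id_l x), <- (comp_id_l y), <- Hji, <- !comp_assoc, H.
  reflexivity.
Qed.

Lemma split_epi_cancel {A B W : Ob C} (i : Hom C A B) (j : Hom C B A) (x y : Hom C B W) :
  i ∘ j = idm B -> x ∘ i = y ∘ i -> x = y.
Proof.
  intros Hij H. rewrite <- (comp_id_r x), <- (comp_id_r y), <- Hij, !comp_assoc, H.
  reflexivity.
Qed.

Lemma tensm_idr_unit_inj {A B : Ob C} (f g : Hom C A B) :
  f ⊗ idm unit = g ⊗ idm unit -> f = g.
Proof.
  intros H. rewrite <- (comp_id_r f), <- (comp_id_r g), <- (runit_iso2 A), !comp_assoc,
    <- !runit_nat, H.
  reflexivity.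
Qed.

Lemma tensm_idl_unit_inj {A B : Ob C} (f g : Hom C A B) :
  idm unit ⊗ f = idm unit ⊗ g -> f = g.
Proof.
  intros H. rewrite <- (comp_id_r f), <- (comp_id_r g), <- (lunit_iso2 A), !comp_assoc,
    <- !lunit_nat, H.
  reflexivity.
Qed.

Lemma tensm_comp_idl {A X Y Z : Ob C} (g : Hom C Y Z) (f : Hom C X Y) :
  idm A ⊗ (g ∘ f) = (idm A ⊗ g) ∘ (idm A ⊗ f).
Proof. rewrite <- tensm_comp, comp_id_l. reflexivity. Qed.

(* Kelly's lemmas: since - ⊗ I is faithful, it suffices to compare both sides tensored with
   I, where they agree by the pentagon, the triangle and naturality of the associator. *)
Lemma kelly_runit (A B : Ob C) :
  (idm A ⊗ runit B) ∘ assoc A B unit = runit (tens A B).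
Proof.
  apply tensm_idr_unit_inj, (split_mono_cancel (assoc A B unit) (assoc_inv A B unit)).
  { apply assoc_iso1. }
  rewrite <- triangle, <- tensm_id. normalize. crewrite assoc_nat. rewrite pentagon.
  normalize. crewrite <- tensm_comp. rewrite comp_id_l, triangle. crewrite <- assoc_nat.
  crewrite <- tensm_comp. rewrite comp_id_l. reflexivity.
Qed.

Lemma kelly_lunit (A B : Ob C) :
  lunit (tens A B) ∘ assoc unit A B = lunit A ⊗ idm B.
Proof.
  apply tensm_idl_unit_inj.
  apply (split_epi_cancel (assoc unit (tens unit A) B) (assoc_inv unit (tens unit A) B)).
  { apply assoc_iso2. }
  apply (split_epi_cancel (assoc unit unit A ⊗ idm B) (assoc_inv unit unit A ⊗ idm B)).
  { rewrite <- tensm_comp, assoc_iso2, comp_id_l, tensm_id. reflexivity. }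
  normalize. rewrite tensm_comp_idl. normalize. crewrite <- pentagon. crewrite triangle.
  rewrite <- tensm_id. crewrite <- assoc_nat. crewrite <- assoc_nat. crewrite <- tensm_comp.
  rewrite triangle, comp_id_l. reflexivity.
Qed.

Lemma kelly_lunit_inv (A B : Ob C) :
  (lunit A ⊗ idm B) ∘ assoc_inv unit A B = lunit (tens A B).
Proof. rewrite <- kelly_lunit, <- comp_assoc, assoc_iso2, comp_id_r. reflexivity. Qed.

Lemma kelly_runit_inv (A B : Ob C) :
  runit (tens A B) ∘ assoc_inv A B unit = idm A ⊗ runit B.
Proof. rewrite <- kelly_runit, <- comp_assoc, assoc_iso2, comp_id_r. reflexivity. Qed.

Lemma comp_id_comm {A B : Ob C} (f : Hom C A B) : idm B ∘ f = f ∘ idm A.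
Proof. rewrite comp_id_l, comp_id_r. reflexivity. Qed.

Lemma tensm_split_fst {A B X Y : Ob C} (f : Hom C A B) (g : Hom C X Y) :
  f ⊗ g = (idm B ⊗ g) ∘ (f ⊗ idm X).
Proof. rewrite <- tensm_comp, comp_id_l, comp_id_r. reflexivity. Qed.

Lemma tensm_split_snd {A B X Y : Ob C} (f : Hom C A B) (g : Hom C X Y) :
  f ⊗ g = (f ⊗ idm Y) ∘ (idm A ⊗ g).
Proof. rewrite <- tensm_comp, comp_id_l, comp_id_r. reflexivity. Qed.

Lemma tensm_comm {A B B' D P Q Q' R : Ob C}
    {f : Hom C B D} {g : Hom C A B} {f' : Hom C B' D} {g' : Hom C A B'}
    {h : Hom C Q R} {k : Hom C P Q} {h' : Hom C Q' R} {k' : Hom C P Q'} :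
  f ∘ g = f' ∘ g' -> h ∘ k = h' ∘ k' -> (f ⊗ h) ∘ (g ⊗ k) = (f' ⊗ h') ∘ (g' ⊗ k').
Proof. intros H1 H2. rewrite <- !tensm_comp, H1, H2. reflexivity. Qed.

Lemma iso_inv_nat {A A' B B' : Ob C} {i : Hom C A B} {j : Hom C B A}
    {i' : Hom C A' B'} {j' : Hom C B' A'} {f : Hom C A A'} {g : Hom C B B'} :
  i ∘ j = idm B -> j' ∘ i' = idm A' -> i' ∘ f = g ∘ i -> f ∘ j = j' ∘ g.
Proof.
  intros Hij Hji' H. rewrite <- (comp_id_l (f ∘ j)), <- Hji'. normalize.
  crewrite H. rewrite Hij, comp_id_r. reflexivity.
Qed.

Lemma assoc_inv_nat {A A' B B' D D' : Ob C} (f : Hom C A A') (g : Hom C B B') (h : Hom C D D') :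
  assoc_inv A' B' D' ∘ (f ⊗ (g ⊗ h)) = ((f ⊗ g) ⊗ h) ∘ assoc_inv A B D.
Proof.
  symmetry. apply (iso_inv_nat (assoc_iso2 A B D) (assoc_iso1 A' B' D') (assoc_nat f g h)).
Qed.

Definition interchange (A B D E : Ob C) :
    Hom C (tens (tens A B) (tens D E)) (tens (tens A D) (tens B E)) :=
  assoc_inv A D (tens B E) ∘ (idm A ⊗ assoc D B E) ∘ (idm A ⊗ (swap B D ⊗ idm E))
  ∘ (idm A ⊗ assoc_inv B D E) ∘ assoc A B (tens D E).

Lemma copy_tens_interchange (X Y : Ob C) :
  copy (tens X Y) = interchange X X Y Y ∘ (copy X ⊗ copy Y).
Proof. rewrite copy_tens. unfold interchange. normalize. reflexivity. Qed.

Lemma interchange_nat {A A' B B' D D' E E' : Ob C}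
    (a : Hom C A A') (b : Hom C B B') (d : Hom C D D') (e : Hom C E E') :
  interchange A' B' D' E' ∘ ((a ⊗ b) ⊗ (d ⊗ e)) = ((a ⊗ d) ⊗ (b ⊗ e)) ∘ interchange A B D E.
Proof.
  unfold interchange. normalize.
  crewrite assoc_nat.
  crewrite (tensm_comm (comp_id_comm a) (assoc_inv_nat b d e)).
  crewrite (tensm_comm (comp_id_comm a) (tensm_comm (swap_nat b d) (comp_id_comm e))).
  crewrite (tensm_comm (comp_id_comm a) (assoc_nat d b e)).
  crewrite assoc_inv_nat.
  reflexivity.
Qed.

Lemma interchange_unitors (X E : Ob C) :
  (lunit E ⊗ runit X) ∘ interchange unit X E unit ∘ (lunit_inv X ⊗ runit_inv E) = swap X E.
Proof.
  unfold interchange. normalize.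
  rewrite (tensm_split_fst (lunit E) (runit X)). normalize.
  crewrite kelly_lunit_inv. crewrite lunit_nat. crewrite lunit_nat. crewrite lunit_nat.
  crewrite kelly_lunit. crewrite <- tensm_comp. rewrite lunit_iso2, comp_id_l.
  crewrite kelly_runit. crewrite runit_nat. crewrite kelly_runit_inv.
  crewrite <- tensm_comp. rewrite runit_iso2, comp_id_l, tensm_id, comp_id_r.
  reflexivity.
Qed.

Definition pairing {A X Y : Ob C} (f : Hom C A X) (g : Hom C A Y) : Hom C A (tens X Y) :=
  (f ⊗ g) ∘ copy A.

Definition marg_fst (X E : Ob C) : Hom C (tens X E) X := runit X ∘ (idm X ⊗ del E).
Definition marg_snd (X E : Ob C) : Hom C (tens X E) E := lunit E ∘ (del X ⊗ idm E).

Lemma copy_pairing (A : Ob C) : copy A = pairing (idm A) (idm A).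
Proof. unfold pairing. rewrite tensm_id, comp_id_l. reflexivity. Qed.

Lemma tensm_pairing {A X Y X' Y' : Ob C} (h : Hom C X X') (k : Hom C Y Y')
    (f : Hom C A X) (g : Hom C A Y) :
  (h ⊗ k) ∘ pairing f g = pairing (h ∘ f) (k ∘ g).
Proof. unfold pairing. rewrite tensm_comp, comp_assoc. reflexivity. Qed.

Lemma swap_pairing {A X Y : Ob C} (f : Hom C A X) (g : Hom C A Y) :
  swap X Y ∘ pairing f g = pairing g f.
Proof. unfold pairing. crewrite swap_nat. rewrite copy_comm. reflexivity. Qed.

Lemma marg_fst_pairing {A X Y : Ob C} (f : Hom C A X) (g : Hom C A Y) :
  marg_fst X Y ∘ pairing f g = f.
Proof.
  unfold marg_fst, pairing. normalize. crewrite <- tensm_comp.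
  rewrite comp_id_l, (unit_terminal (del Y ∘ g)), tensm_split_snd. normalize.
  rewrite copy_counit_r. crewrite runit_nat. rewrite runit_iso2, comp_id_r. reflexivity.
Qed.

Lemma marg_snd_pairing {A X Y : Ob C} (f : Hom C A X) (g : Hom C A Y) :
  marg_snd X Y ∘ pairing f g = g.
Proof.
  unfold marg_snd, pairing. normalize. crewrite <- tensm_comp.
  rewrite comp_id_l, (unit_terminal (del X ∘ f)), tensm_split_fst. normalize.
  rewrite copy_counit_l. crewrite lunit_nat. rewrite lunit_iso2, comp_id_r. reflexivity.
Qed.

Lemma marg_fst_copy (X : Ob C) : marg_fst X X ∘ copy X = idm X.
Proof. rewrite copy_pairing. apply marg_fst_pairing. Qed.

Lemma marg_snd_copy (X : Ob C) : marg_snd X X ∘ copy X = idm X.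
Proof. rewrite copy_pairing. apply marg_snd_pairing. Qed.

Lemma pairing_marg_snd_fst (X E : Ob C) : pairing (marg_snd X E) (marg_fst X E) = swap X E.
Proof.
  unfold pairing, marg_snd, marg_fst. rewrite copy_tens_interchange, tensm_comp. normalize.
  crewrite <- (interchange_nat (del X) (idm X) (idm E) (del E)).
  crewrite <- tensm_comp. rewrite copy_counit_l, copy_counit_r.
  apply interchange_unitors.
Qed.

Definition indep {A X E : Ob C} (pi : Hom C A (tens X E)) : Prop :=
  pi = pairing (marg_fst X E ∘ pi) (marg_snd X E ∘ pi).

Lemma indep_pairing {A X Y : Ob C} (f : Hom C A X) (g : Hom C A Y) : indep (pairing f g).
Proof. unfold indep. rewrite marg_fst_pairing, marg_snd_pairing. reflexivity. Qed.

Lemma is_dilation_marg_fst {A X E : Ob C} (p : Hom C A X) (pi : Hom C A (tens X E)) :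
  is_dilation p pi <-> marg_fst X E ∘ pi = p.
Proof. unfold is_dilation, marg_fst. rewrite comp_assoc. tauto. Qed.

Lemma non_creative_of_indep {A X : Ob C} (p : Hom C A X) :
  (forall E (pi : Hom C A (tens X E)), is_dilation p pi -> indep pi) -> non_creative p.
Proof.
  intros Hind E pi Hpi. exists (pairing (idm A) (marg_snd X E ∘ pi)). split.
  - apply is_dilation_marg_fst, marg_fst_pairing.
  - rewrite tensm_pairing, comp_id_l, comp_id_r.
    pose proof (Hind E pi Hpi) as Hpi_indep. apply is_dilation_marg_fst in Hpi.
    rewrite <- Hpi. exact Hpi_indep.
Qed.

Lemma indep_of_non_creative {A X : Ob C} (p : Hom C A X) :
  initial_dilation (idm A) (copy A) -> non_creative p ->
  forall E (pi : Hom C A (tens X E)), is_dilation p pi -> indep pi.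
Proof.
  intros Hcopy Hnc E pi Hpi. destruct (Hnc E pi Hpi) as [iota [Hiota ->]].
  destruct (proj1 (proj2 Hcopy E iota Hiota)) as [f <-].
  rewrite copy_pairing, !tensm_pairing, !comp_id_l, !comp_id_r. apply indep_pairing.
Qed.

Lemma deterministic_of_indep_copy {A X : Ob C} (p : Hom C A X) :
  indep (copy X ∘ p) -> deterministic p.
Proof.
  unfold indep, deterministic. intros H.
  rewrite H, !comp_assoc, marg_fst_copy, marg_snd_copy, !comp_id_l. reflexivity.
Qed.

Lemma copy_comp_is_dilation {A X : Ob C} (p : Hom C A X) : is_dilation p (copy X ∘ p).
Proof. apply is_dilation_marg_fst. rewrite comp_assoc, marg_fst_copy, comp_id_l. reflexivity. Qed.

Lemma deterministic_of_non_creative {A X : Ob C} (p : Hom C A X) :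
  initial_dilation (idm A) (copy A) -> non_creative p -> deterministic p.
Proof.
  intros Hcopy Hnc. apply deterministic_of_indep_copy.
  apply (indep_of_non_creative p Hcopy Hnc), copy_comp_is_dilation.
Qed.

Lemma positive_of_deterministic_non_creative :
  (forall X : Ob C, initial_dilation (idm X) (copy X)) ->
  (forall (A X : Ob C) (p : Hom C A X), deterministic p -> non_creative p) ->
  positive C.
Proof.
  intros Hcopy Hdet X Y Z f g Hgf.
  assert (Hpi : is_dilation (g ∘ f) (pairing g (idm Y) ∘ f)).
  { apply is_dilation_marg_fst. rewrite comp_assoc, marg_fst_pairing. reflexivity. }
  assert (Hind : pairing g (idm Y) ∘ f = pairing (g ∘ f) f).
  { pose proof (indep_of_non_creative (g ∘ f) (Hcopy X) (Hdet _ _ _ Hgf) _ _ Hpi) as Hpi_indep.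
    unfold indep in Hpi_indep.
    rewrite !comp_assoc, marg_fst_pairing, marg_snd_pairing, comp_id_l in Hpi_indep.
    exact Hpi_indep. }
  change (pairing (idm Y) g ∘ f = pairing f (g ∘ f)).
  rewrite <- (swap_pairing g (idm Y)), <- comp_assoc, Hind. apply swap_pairing.
Qed.

Lemma non_creative_of_deterministic {A X : Ob C} (p : Hom C A X) :
  positive C -> deterministic p -> non_creative p.
Proof.
  intros Hpos Hp. apply non_creative_of_indep. intros E pi Hpi.
  apply is_dilation_marg_fst in Hpi.
  assert (Hcoupling : pairing (idm _) (marg_fst X E) ∘ pi = pairing pi p).
  { rewrite <- Hpi. apply Hpos. rewrite Hpi. exact Hp. }
  assert (Hswap : swap X E ∘ pi = pairing (marg_snd X E ∘ pi) p).
  { rewrite <- pairing_marg_snd_fst.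
    transitivity (((marg_snd X E ⊗ idm X) ∘ pairing (idm _) (marg_fst X E)) ∘ pi).
    - rewrite tensm_pairing, comp_id_r, comp_id_l. reflexivity.
    - rewrite <- comp_assoc, Hcoupling, tensm_pairing, comp_id_l. reflexivity. }
  unfold indep. rewrite Hpi.
  transitivity (swap E X ∘ swap X E ∘ pi).
  - rewrite comp_assoc, swap_invol, comp_id_l. reflexivity.
  - rewrite Hswap. apply swap_pairing.
Qed.

End MarkovCategory.

Theorem lemma4p15 (C : MarkovCat) :
  (forall X : Ob C, initial_dilation (idm X) (copy X)) ->
  (forall (A X : Ob C) (p : Hom C A X), non_creative p -> deterministic p) /\
  ((forall (A X : Ob C) (p : Hom C A X), non_creative p <-> deterministic p) <-> positive C).
Proof.
  intros Hcopy.
  assert (Hnc_det : forall (A X : Ob C) (p : Hom C A X), non_creative p -> deterministic p).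
  { intros A X p. apply deterministic_of_non_creative, Hcopy. }
  split; [exact Hnc_det |]. split.
  - intros Hequiv. apply (positive_of_deterministic_non_creative Hcopy).
    intros A X p. apply Hequiv.
  - intros Hpos A X p. split; [apply Hnc_det | apply non_creative_of_deterministic, Hpos].
Qed.
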